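(* Let $n\ge2$ and $\Delta\subset B_n$ a proper ideal. The face numbers $f_j(\mathrm{Bier}(B_n,\Delta))$, $0\le j\le n-1$, depend only on $n$ and the differences $f_i(\Delta)-f_{n-i}(\Delta)$, $0\le i\le\lfloor\frac{n-1}2\rfloor$.
   Context: $B_n$ is the Boolean lattice of subsets of $[1,n]$. A proper ideal $\Delta\subset B_n$ is a nonempty family of subsets of $[1,n]$ closed under taking subsets with $[1,n]\notin\Delta$; $f_i(\Delta)$ is the number of sets of cardinality $i$ in $\Delta$. The Bier sphere $\mathrm{Bier}(B_n,\Delta)$ is the simplicial complex whose faces are the pairs $(B,C)$ with $B\subsetneq C\subseteq[1,n]$, $B\in\Delta$, $C\notin\Delta$, with $(B',C')$ a face of $(B,C)$ iff $B'\subseteq B$ and $C\subseteq C'$; the face $(B,C)$ has $|B|+n-|C|$ vertices. $f_j(\mathrm{Bier}(B_n,\Delta))$ is its number of faces with $j$ vertices. *)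

From mathcomp Require Import all_boot all_order all_algebra.
Set Implicit Arguments. Unset Strict Implicit. Unset Printing Implicit Defensive.

(* The Boolean lattice B_n is modelled as {set 'I_n} (ground set [1,n]
   relabelled as {0,...,n-1}). A family Delta : {set {set 'I_n}}. *)

Definition Bn_proper_ideal (n : nat) (Delta : {set {set 'I_n}}) : Prop :=
  [/\ Delta != set0,
      (forall A B : {set 'I_n}, A \subset B -> B \in Delta -> A \in Delta)
    & [set: 'I_n] \notin Delta].

Definition fnum (n : nat) (Delta : {set {set 'I_n}}) (i : nat) : nat :=
  #|[set A in Delta | #|A| == i]|.

Definition bier_faces (n : nat) (Delta : {set {set 'I_n}})
  : {set {set 'I_n} * {set 'I_n}} :=
  [set p : {set 'I_n} * {set 'I_n} | [&& p.1 \proper p.2, p.1 \in Delta & p.2 \notin Delta]].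

Definition bier_nverts (n : nat) (p : {set 'I_n} * {set 'I_n}) : nat :=
  #|p.1| + (n - #|p.2|).

Definition bier_fnum (n : nat) (Delta : {set {set 'I_n}}) (j : nat) : nat :=
  #|[set p in bier_faces Delta | bier_nverts p == j]|.

From mathcomp Require Import all_boot all_order all_algebra zify.
Import GRing.Theory Num.Theory.

(* A face (B, C) of Bier(B_n, Delta) with j vertices is an interval B <= C of
   rank n - j with B in Delta, minus those with C in Delta (for which B in Delta
   is automatic, Delta being an ideal).  Counting both kinds of intervals gives
     f_j = sum_(B in Delta) (C(n - |B|, n - j) - C(|B|, n - j))
         = sum_i f_i(Delta) w(i),   with w(n - i) = - w(i).
   Hence 2 f_j = sum_i (f_i - f_(n-i)) w(i), and each difference f_i - f_(n-i)
   is, up to sign, one with i <= (n-1)/2, or vanishes when i = n - i. *)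

Section AntisymmetricWeights.
Variables (R : numDomainType) (n : nat) (g : nat -> R).
Hypothesis g_antisym : forall i, i <= n -> g (n - i) = (- g i)%R.

Lemma sum_mul_antisym_double (f : nat -> R) :
  ((\sum_(i < n.+1) f i * g i) *+ 2 =
   \sum_(i < n.+1) (f i - f (n - i)%N) * g i)%R.
Proof.
have reflected :
    (\sum_(i < n.+1) f (n - i)%N * g i = - \sum_(i < n.+1) f i * g i)%R.
  rewrite (reindex_inj rev_ord_inj) -sumrN; apply: eq_bigr => i _ /=.
  have le_in : i <= n by rewrite -ltnS.
  by rewrite subSS subKn // g_antisym // mulrN.
under [RHS]eq_bigr do rewrite mulrBl.
by rewrite sumrB reflected opprK mulr2n.
Qed.

Lemma sum_mul_antisym_eq (f1 f2 : nat -> R) :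
  (forall i, i <= (n.-1)./2 ->
     (f1 i - f1 (n - i)%N = f2 i - f2 (n - i)%N)%R) ->
  (\sum_(i < n.+1) f1 i * g i = \sum_(i < n.+1) f2 i * g i)%R.
Proof.
move=> low_half_eq; apply/eqP; rewrite -[_ == _]/(false || _) -(eqrMn2r 2).
rewrite !sum_mul_antisym_double; apply/eqP/eq_bigr => i _; congr (_ * _)%R.
have le_in : i <= n by rewrite -ltnS.
have [lo|hi] := leqP i (n.-1)./2; first exact: low_half_eq.
have [lo'|hi'] := leqP (n - i) (n.-1)./2.
  move: (low_half_eq _ lo'); rewrite subKn // => high_eq.
  by apply: oppr_inj; rewrite !opprB.
have -> : n - i = i by move: hi hi'; have := odd_double_half n.-1; lia.
by rewrite !subrr.
Qed.

End AntisymmetricWeights.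

Lemma card_pairs_by_fst (T1 T2 : finType) (P : pred (T1 * T2)) :
  #|[set p | P p]| = \sum_x #|[set y | P (x, y)]|.
Proof.
under eq_bigr do rewrite -sum1_card.
by rewrite pair_big_dep -sum1_card; apply: eq_bigl => -[x y]; rewrite !inE.
Qed.

Lemma card_pairs_by_snd (T1 T2 : finType) (P : pred (T1 * T2)) :
  #|[set p | P p]| = \sum_y #|[set x | P (x, y)]|.
Proof.
rewrite -(@card_pairs_by_fst _ _ (fun q : T2 * T1 => P (q.2, q.1))).
rewrite -(on_card_preimset (f := @swap_pair T2 T1)); last first.
  exact: onW_bij (Bijective swap_pairK swap_pairK).
by apply: eq_card => -[y x]; rewrite !inE.
Qed.

Section IntervalCounting.
Variable T : finType.

Lemma card_subsets_codim (A : {set T}) k :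
  #|[set B : {set T} | B \subset A & #|A| - #|B| == k]| = 'C(#|A|, k).
Proof.
have setDK (D : {set T}) : D \subset A -> A :\: (A :\: D) = D.
  by move=> sDA; rewrite setDDr setDv set0U (setIidPr sDA).
rewrite -cards_draws -(card_in_imset (f := setD A)); last first.
  move=> D1 D2; rewrite !inE => /andP[sD1A _] /andP[sD2A _] eqD.
  by rewrite -(setDK _ sD1A) -(setDK _ sD2A) eqD.
apply: eq_card => B; rewrite inE; apply/imsetP/idP => [[D]|/andP[sBA /eqP <-]].
  by rewrite inE => /andP[sDA /eqP <-] ->; rewrite subsetDl cardsDS ?eqxx.
exists (A :\: B); last by rewrite setDK.
have leBA := subset_leq_card sBA.
by rewrite inE subsetDl cardsDS // subKn ?eqxx.
Qed.

Lemma card_supersets_codim (B : {set T}) k :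
  #|[set C : {set T} | B \subset C & #|C| - #|B| == k]| = 'C(#|T| - #|B|, k).
Proof.
have -> : #|T| - #|B| = #|~: B| by rewrite -(cardsC B) addKn.
rewrite -card_subsets_codim -[in RHS](card_preimset _ (@setC_inj T)).
apply: eq_card => C; rewrite !inE setCS; case: (boolP (B \subset C)) => //= sBC.
have := cardsC B; have := cardsC C; have := subset_leq_card sBC.
by move=> *; congr (_ == k); lia.
Qed.

Definition rank_intervals (k : nat) : {set {set T} * {set T}} :=
  [set p : {set T} * {set T} | p.1 \subset p.2 & #|p.2| - #|p.1| == k].

Lemma card_rank_intervals_bot (D : {set {set T}}) k :
  #|[set p in rank_intervals k | p.1 \in D]| = \sum_(B in D) 'C(#|T| - #|B|, k).
Proof.
rewrite card_pairs_by_fst [RHS]big_mkcond; apply: eq_bigr => B _.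
case: ifP => _; last by apply: eq_card0 => C; rewrite !inE andbF.
by rewrite -card_supersets_codim; apply: eq_card => C; rewrite !inE andbT.
Qed.

Lemma card_rank_intervals_top (D : {set {set T}}) k :
  #|[set p in rank_intervals k | p.2 \in D]| = \sum_(C in D) 'C(#|C|, k).
Proof.
rewrite card_pairs_by_snd [RHS]big_mkcond; apply: eq_bigr => C _.
case: ifP => _; last by apply: eq_card0 => B; rewrite !inE andbF.
by rewrite -card_subsets_codim; apply: eq_card => B; rewrite !inE andbT.
Qed.

Lemma card_rank_intervals_leaving (D : {set {set T}}) k :
  (forall A B : {set T}, A \subset B -> B \in D -> A \in D) ->
  (#|[set p in rank_intervals k | (p.1 \in D) && (p.2 \notin D)]|%:Z =
   \sum_(B in D) ('C(#|T| - #|B|, k)%:Z - 'C(#|B|, k)%:Z))%R.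
Proof.
move=> D_down.
set bot := [set p in rank_intervals k | p.1 \in D].
set top := [set p in rank_intervals k | p.2 \in D].
have top_sub_bot : top \subset bot.
  apply/subsetP => -[B C]; rewrite !inE /= => /andP[/andP[sBC ->] CinD].
  by rewrite sBC (D_down _ _ sBC CinD).
have -> : [set p in rank_intervals k | (p.1 \in D) && (p.2 \notin D)] =
          bot :\: top.
  apply/setP => p; rewrite !inE.
  by case: (p.1 \subset p.2); case: (_ == k); case: (p.1 \in D);
     case: (p.2 \in D).
rewrite sumrB -!(big_morph Posz PoszD (erefl (0 : int))).
rewrite -card_rank_intervals_bot -card_rank_intervals_top.
by rewrite -(cardsID top bot) (setIidPr top_sub_bot) PoszD addrC addKr.
Qed.

End IntervalCounting.

Definition bier_weight (n k i : nat) : int := ('C(n - i, k)%:Z - 'C(i, k)%:Z)%R.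

Lemma bier_weight_antisym n k i :
  i <= n -> bier_weight n k (n - i) = (- bier_weight n k i)%R.
Proof. by move=> le_in; rewrite /bier_weight subKn // opprB. Qed.

Section BierFaces.
Variables (n : nat) (Delta : {set {set 'I_n}}).

Lemma bier_fnum_leaving j : j <= n ->
  bier_fnum Delta j =
  #|[set p in rank_intervals 'I_n (n - j)
       | (p.1 \in Delta) && (p.2 \notin Delta)]|.
Proof.
move=> le_jn; apply: eq_card => -[B C]; rewrite !inE /bier_nverts /=.
case/boolP: (B \in Delta) => BinD; case/boolP: (C \in Delta) => CinD;
  rewrite ?andbF //=.
have neBC : B != C by apply: contraNneq CinD => <-.
rewrite properEneq neBC /=; case/boolP: (B \subset C) => //= sBC.
have := subset_leq_card sBC; have := subset_leq_card (subsetT C).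
rewrite cardsT card_ord andbT; move: #|B| #|C| => b c le_cn le_bc.
by apply/eqP/eqP; lia.
Qed.

Lemma sum_card_fnum (h : nat -> int) :
  (\sum_(B in Delta) h #|B| = \sum_(i < n.+1) (fnum Delta i)%:Z * h i)%R.
Proof.
transitivity (\sum_(i < n.+1) \sum_(B in Delta | #|B| == i) h i)%R; last first.
  apply: eq_bigr => i _; rewrite sumr_const -mulr_natl natz; congr (_%:Z * _)%R.
  by apply: eq_card => B; rewrite !inE.
have card_small (B : {set 'I_n}) : #|B| < n.+1.
  by rewrite ltnS -[X in _ <= X](card_ord n) max_card.
pose size_class (B : {set 'I_n}) : 'I_n.+1 := inord #|B|.
rewrite [LHS](partition_big size_class xpredT) //= /size_class.
apply: eq_bigr => i _; apply: eq_big => [B|B /andP[_ /eqP/(congr1 val)]].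
  by congr (_ && _); rewrite -val_eqE /= inordK.
by rewrite /= inordK // => ->.
Qed.

Lemma bier_fnum_weighted j :
  (forall A B : {set 'I_n}, A \subset B -> B \in Delta -> A \in Delta) ->
  j <= n ->
  ((bier_fnum Delta j)%:Z =
   \sum_(i < n.+1) (fnum Delta i)%:Z * bier_weight n (n - j) i)%R.
Proof.
move=> Delta_down le_jn.
rewrite bier_fnum_leaving // card_rank_intervals_leaving // -sum_card_fnum.
by apply: eq_bigr => B _; rewrite card_ord.
Qed.

End BierFaces.

Theorem corollary10 (n : nat) (Delta1 Delta2 : {set {set 'I_n}}) :
  2 <= n ->
  Bn_proper_ideal Delta1 -> Bn_proper_ideal Delta2 ->
  (forall i : nat, i <= (n.-1)./2 ->
     ((fnum Delta1 i)%:Z - (fnum Delta1 (n - i))%:Z =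
      (fnum Delta2 i)%:Z - (fnum Delta2 (n - i))%:Z)%R) ->
  forall j : nat, j <= n.-1 -> bier_fnum Delta1 j = bier_fnum Delta2 j.
Proof.
move=> _ [_ down1 _] [_ down2 _] low_half_eq j le_j_pn.
have le_jn : j <= n := leq_trans le_j_pn (leq_pred n).
apply/eqP; rewrite -eqz_nat !bier_fnum_weighted //; apply/eqP.
exact: (@sum_mul_antisym_eq _ n _ (bier_weight_antisym n (n - j))
  (fun i => Posz (fnum Delta1 i)) (fun i => Posz (fnum Delta2 i)) low_half_eq).
Qed.
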